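(* Let $c,d,s$ be positive integers with $c,d\le s$. Let $E$ be an $s\times s$ random matrix uniformly distributed over $\mathbb{F}_q^{s\times s}$, and let $F$ and $G$ be arbitrary (fixed) full-rank matrices of sizes $c\times s$ and $s\times d$, respectively. Then $$H_q(FE\mid EG)\ge cs-cd.$$
   Context: $\mathbb{F}_q$ is a finite field with $q$ elements; $H_q$ denotes Shannon (conditional) entropy with logarithm base $q$. *)

From HB Require Import structures.
From mathcomp Require Import all_boot all_order all_algebra all_field.
From mathcomp Require Import reals exp.
Set Implicit Arguments. Unset Strict Implicit. Unset Printing Implicit Defensive.
Import Order.TTheory GRing.Theory Num.Theory.
Local Open Scope ring_scope.

Definition logb (R : realType) (b x : R) : R := ln x / ln b.

Definition pjoint (R : realType) (Omega A B : finType)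
  (X : Omega -> A) (Y : Omega -> B) (a : A) (y : B) : R :=
  #|[set w : Omega | (X w == a) && (Y w == y)]|%:R / #|Omega|%:R.

Definition pmarg (R : realType) (Omega B : finType) (Y : Omega -> B) (y : B) : R :=
  #|[set w : Omega | Y w == y]|%:R / #|Omega|%:R.

(* Shannon conditional entropy H_b(X | Y)
   = - sum_{a,y : p(a,y) > 0} p(a,y) log_b (p(a,y) / p(y))  (convention 0 log 0 = 0) *)
Definition cond_entropy (R : realType) (Omega A B : finType)
  (X : Omega -> A) (Y : Omega -> B) (b : R) : R :=
  - \sum_(a : A) \sum_(y : B | @pjoint R _ _ _ X Y a y != 0)
      @pjoint R _ _ _ X Y a y * logb b (@pjoint R _ _ _ X Y a y / @pmarg R _ _ Y y).

(* The maps E |-> (FE, EG) and E |-> EG are additive, so every nonempty fibre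
   of either one is a translate of its kernel.  With F F' = 1 and the rows of N
   spanning the left kernel of G, (E, B) |-> E + F' B N embeds
   {E | FE = 0, EG = 0} x K^(c x dim ker G) into {E | EG = 0}.  Hence every
   observed value of FE has conditional probability at most q^-(c dim ker G)
   given EG, and c dim ker G = c (s - d). *)
From HB Require Import structures.
From mathcomp Require Import all_boot all_order all_algebra all_field.
From mathcomp Require Import reals exp.
Set Implicit Arguments. Unset Strict Implicit. Unset Printing Implicit Defensive.
Import Order.TTheory GRing.Theory Num.Theory.
Local Open Scope ring_scope.

Lemma card_fiber_additive (U : finZmodType) (V : zmodType) (f : U -> V)
    (fB : {morph f : x y / x - y}) (x0 : U) :
  #|[set x | f x == f x0]| = #|[set x | f x == 0]|.
Proof.
have -> : [set x | f x == 0] = (fun x => x - x0) @: [set x | f x == f x0].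
  apply/setP => z; rewrite inE; apply/idP/imsetP => [/eqP fz0 | [x]].
    by exists (z + x0); rewrite ?addrK // inE -subr_eq0 -fB addrK fz0.
  by rewrite inE => /eqP fx ->; rewrite fB fx subrr.
by rewrite card_imset //; apply: addIr.
Qed.

Lemma card_ker_mulmx2_le (K : finFieldType) (c m n d : nat)
    (F : 'M[K]_(c, m)) (G : 'M[K]_(n, d)) :
  row_free F ->
  (#|[set E : 'M_(m, n) | (F *m E == 0%R) && (E *m G == 0%R)]|
     * #|K| ^ (c * \rank (kermx G))
   <= #|[set E : 'M_(m, n) | E *m G == 0%R]|)%N.
Proof.
move=> /row_freeP[F' FF'].
set N := row_base (kermx G).
have /row_freeP[N' NN'] : row_free N by apply: row_base_free.
have NG : N *m G = 0 by apply/sub_kermxP; rewrite eq_row_base.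
clearbody N.
pose f (p : 'M[K]_(m, n) * 'M[K]_(c, \rank (kermx G))) := p.1 + F' *m (p.2 *m N).
rewrite -card_mx -cardsT -cardsX -(@card_in_imset _ _ f).
  apply/subset_leq_card/subsetP => Z /imsetP[[E B]].
  rewrite !inE /= => /andP[/andP[_ /eqP EG] _] ->.
  by rewrite /f /= mulmxDl EG -!mulmxA NG !mulmx0 add0r.
move=> [E1 B1] [E2 B2]; rewrite !inE /= /f /=.
move=> /andP[/andP[/eqP FE1 _] _] /andP[/andP[/eqP FE2 _] _] eq_f.
have eqBN : B1 *m N = B2 *m N.
  by have := congr1 (mulmx F) eq_f; rewrite !mulmxDr FE1 FE2 !mulmxA FF' !add0r !mul1mx.
have eqB : B1 = B2 by rewrite -(mulmx1 B1) -(mulmx1 B2) -NN' !mulmxA eqBN.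
by move: eq_f; rewrite eqB /= => /addIr ->.
Qed.

Lemma logb_le_opp (R : realType) (b x : R) (k : nat) :
  1 < b -> 0 < x -> x * b ^+ k <= 1 -> logb b x <= - k%:R.
Proof.
move=> b1 x0 xbk1.
have b0 : 0 < b by apply: lt_trans b1.
have lnb0 : 0 < ln b by apply: ln_gt0.
have := ln_le0 xbk1; rewrite lnM ?posrE ?exprn_gt0 // lnXn //.
by rewrite /logb ler_pdivrMr // mulNr mulr_natl => ?; rewrite -subr_le0 opprK.
Qed.

Section ConditionalEntropy.
Variables (R : realType) (Omega A B : finType) (X : Omega -> A) (Y : Omega -> B).
Hypothesis Omega_gt0 : (0 < #|Omega|)%N.

Let pj := @pjoint R _ _ _ X Y.
Let pm := @pmarg R _ _ Y.

Lemma sum_pjoint : \sum_a \sum_y pj a y = 1.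
Proof.
have sum_card : (\sum_a \sum_y #|[set w | (X w == a) && (Y w == y)]|)%N = #|Omega|.
  rewrite pair_big /= -sum1_card (partition_big (fun w => (X w, Y w)) predT) //=.
  apply: eq_bigr => -[a y] _; rewrite -sum1_card.
  by apply: eq_bigl => w; rewrite !inE xpair_eqE.
under eq_bigr do rewrite -mulr_suml -natr_sum.
by rewrite -mulr_suml -natr_sum sum_card divff // pnatr_eq0 -lt0n.
Qed.

Lemma pjoint_div_pmarg a y :
  pj a y / pm y
  = #|[set w | (X w == a) && (Y w == y)]|%:R / #|[set w | Y w == y]|%:R.
Proof.
by rewrite /pj /pm /pjoint /pmarg invf_div mulrA divfK // pnatr_eq0 -lt0n.
Qed.

Lemma cond_entropy_ge_of_logb (b r : R) :
  (forall a y, pj a y != 0 -> logb b (pj a y / pm y) <= - r) ->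
  r <= cond_entropy X Y b.
Proof.
move=> logb_le.
have pj_ge0 a y : 0 <= pj a y by rewrite divr_ge0 ?ler0n.
have -> : cond_entropy X Y b
          = \sum_a \sum_(y | pj a y != 0) pj a y * - logb b (pj a y / pm y).
  by rewrite /cond_entropy -sumrN; apply: eq_bigr => a _; rewrite -sumrN;
     apply: eq_bigr => y _; rewrite mulrN.
rewrite -[leLHS]mulr1 -sum_pjoint mulr_sumr; apply: ler_sum => a _.
rewrite -(big_rmcond (fun y => pj a y != 0)); last by move=> y /negbNE/eqP.
rewrite mulr_sumr; apply: ler_sum => y pj_neq0.
by rewrite mulrC ler_wpM2l // lerNr logb_le.
Qed.

Lemma cond_entropy_ge_of_card (b : R) (k : nat) : 1 < b ->
  (forall a y, (0 < #|[set w | (X w == a) && (Y w == y)]|)%N ->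
     #|[set w | (X w == a) && (Y w == y)]|%:R * b ^+ k <= #|[set w | Y w == y]|%:R) ->
  k%:R <= cond_entropy X Y b.
Proof.
move=> b1 card_le; apply: cond_entropy_ge_of_logb => a y pj_neq0.
have J_gt0 : (0 < #|[set w | (X w == a) && (Y w == y)]|)%N.
  by rewrite lt0n; apply: contra pj_neq0 => /eqP J0; rewrite /pj /pjoint J0 mul0r.
have Y_gt0 : (0 < #|[set w | Y w == y]|)%N.
  apply: leq_trans J_gt0 (subset_leq_card _).
  by apply/subsetP => w; rewrite !inE => /andP[].
rewrite pjoint_div_pmarg; apply: logb_le_opp => //; first by rewrite divr_gt0 ?ltr0n.
by rewrite mulrAC ler_pdivrMr ?ltr0n // mul1r card_le.
Qed.

End ConditionalEntropy.

Theorem lemma1 (R : realType) (K : finFieldType) (c d s : nat)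
  (F : 'M[K]_(c, s)) (G : 'M[K]_(s, d)) :
  (0 < c)%N -> (0 < d)%N -> (0 < s)%N -> (c <= s)%N -> (d <= s)%N ->
  \rank F = c -> \rank G = d ->
  ((c * s - c * d)%N%:R : R) <=
    @cond_entropy R _ _ _ (fun E : 'M[K]_s => F *m E) (fun E : 'M[K]_s => E *m G)
      (#|K|%:R : R).
Proof.
move=> _ _ _ _ _ rkF rkG.
have rfF : row_free F by rewrite /row_free rkF.
apply: (@le_trans _ _ (c * \rank (kermx G))%N%:R).
  by rewrite ler_nat mxrank_ker rkG mulnBr.
apply: cond_entropy_ge_of_card => [||a y /card_gt0P[E0]].
- by apply/card_gt0P; exists 0.
- by rewrite ltr1n card_finNzRing_gt1.
rewrite inE => /andP[/eqP <- /eqP <-].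
pose XY (E : 'M[K]_s) := (F *m E, E *m G).
have XY_B : {morph XY : E1 E2 / E1 - E2} by move=> E1 E2; rewrite /XY mulmxBr mulmxBl.
have EG_B : {morph (fun E : 'M[K]_s => E *m G) : E1 E2 / E1 - E2}.
  by move=> E1 E2; rewrite mulmxBl.
rewrite -natrX -natrM ler_nat.
rewrite [X in (X * _)%N](card_fiber_additive XY_B E0).
rewrite [X in (_ <= X)%N](card_fiber_additive EG_B E0).
exact: card_ker_mulmx2_le.
Qed.
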